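(* Let $d>0$ be square-free and $n\in\mathbb{Z}$. Then every immersed totally geodesic surface in $\mathbb{H}^3/\Gamma_d(n)$ of discriminant $D\le n/4$ is embedded.
   Context: $\mathcal{O}_d$ is the ring of integers of $\mathbb{Q}(\sqrt{-d})$, $\Gamma_d=\mathrm{PSL}(2,\mathcal{O}_d)$, and $\Gamma_d(n)=\ker(\Gamma_d\to\mathrm{PSL}(2,\mathcal{O}_d/n\mathcal{O}_d))$. Immersed totally geodesic surfaces in $\mathbb{H}^3/\Gamma$ ($\Gamma<\Gamma_d$ of finite index) correspond to $\Gamma$-orbits of circles/lines $\mathcal{C}:a|z|^2+Bz+\bar B\bar z+c=0$ with $a,c\in\mathbb{Z}$, $B\in\mathcal{O}_d$; the discriminant of the surface is $D=|B|^2-ac>0$. The surface is the image of the hyperbolic plane $H_{\mathcal{C}}$ bounded by $\mathcal{C}$, and it is embedded if for all $\gamma\in\Gamma$, $\gamma H_{\mathcal{C}}=H_{\mathcal{C}}$ or $\gamma H_{\mathcal{C}}\cap H_{\mathcal{C}}=\emptyset$. *)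

From HB Require Import structures.
From mathcomp Require Import all_boot all_order all_algebra.
From mathcomp Require Import complex.
From mathcomp Require Import reals.
From mathcomp Require Import classical_sets.

Set Implicit Arguments.
Unset Strict Implicit.
Unset Printing Implicit Defensive.

Import Order.TTheory GRing.Theory Num.Theory.
Local Open Scope ring_scope.
Local Open Scope complex_scope.
Local Open Scope classical_set_scope.

Definition squarefree (d : nat) : Prop :=
  forall p : nat, prime p -> ~~ (p * p %| d)%N.

Section Bianchi.
Variable R : realType.

Definition sqrt_md (d : nat) : R[i] := 0 +i* Num.sqrt (d%:R).

Definition in_Qd (d : nat) (z : R[i]) : Prop :=
  exists x y : rat, z = ratr x + ratr y * sqrt_md d.

Definition alg_integer (z : R[i]) : Prop :=
  exists p : {poly int}, p \is monic /\ root (map_poly (fun k : int => k%:~R) p) z.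

Definition in_Od (d : nat) (z : R[i]) : Prop := in_Qd d z /\ alg_integer z.

Definition in_nOd (d : nat) (n : int) (z : R[i]) : Prop :=
  exists w, in_Od d w /\ z = n%:~R * w.

(* a matrix [[al, be], [ga, de]] in SL(2, O_d) representing an element of
   Gamma_d(n) = ker (PSL(2,O_d) -> PSL(2,O_d/nO_d)), i.e. congruent to +-I mod n *)
Definition in_Gamma_n (d : nat) (n : int) (al be ga de : R[i]) : Prop :=
  [/\ in_Od d al, in_Od d be, in_Od d ga, in_Od d de & al * de - be * ga = 1]
  /\ ((in_nOd d n (al - 1) /\ in_nOd d n be /\ in_nOd d n ga /\ in_nOd d n (de - 1))
   \/ (in_nOd d n (al + 1) /\ in_nOd d n be /\ in_nOd d n ga /\ in_nOd d n (de + 1))).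

Definition normsq (z : R[i]) : R := complex.Re z ^+ 2 + complex.Im z ^+ 2.

(* upper half-space model of H^3: points (z, t) with t > 0 *)
Definition H3 : Type := (R[i] * R)%type.

(* Poincare extension of the Moebius map of [[al, be], [ga, de]] to H^3 *)
Definition mob_act (al be ga de : R[i]) (p : H3) : H3 :=
  let z := p.1 in let t := p.2 in
  let N := normsq (ga * z + de) + normsq ga * t ^+ 2 in
  (((al * z + be) * (ga * z + de)^* + al * ga^* * (t ^+ 2)%:C) * (N^-1)%:C,
   t / N).

(* hyperbolic plane bounded by the circle/line a|z|^2 + Bz + conj(B)conj(z) + c = 0:
   the hemisphere (or vertical half-plane) a(|z|^2 + t^2) + Bz + conj(B)conj(z) + c = 0 *)
Definition hplane (a : int) (B : R[i]) (c : int) : set H3 :=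
  [set p | 0 < p.2 /\
     a%:~R * (normsq p.1 + p.2 ^+ 2) + complex.Re (B * p.1 + B^* * p.1^*) + c%:~R = 0].

Definition discr (a : int) (B : R[i]) (c : int) : R := normsq B - a%:~R * c%:~R.

Definition embedded_in_Gamma_n (d : nat) (n : int) (a : int) (B : R[i]) (c : int) : Prop :=
  forall al be ga de : R[i], in_Gamma_n d n al be ga de ->
    (mob_act al be ga de @` hplane a B c = hplane a B c) \/
    (mob_act al be ga de @` hplane a B c `&` hplane a B c = set0).

End Bianchi.

From mathcomp Require Import all_boot all_order all_algebra.
From mathcomp Require Import complex reals classical_sets boolp.
From mathcomp Require Import ring lra zify.

(* A matrix g of SL(2, O_d) congruent to +-1 mod n pulls the Hermitian form
   C = (a, B, c) of the circle back to a form C' = g^* C with the same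
   discriminant D, and C' - C = n C'' with C'' integral over O_d = Z[omega_d],
   so disc(C' - C) lies in n^2 Z.  If g H meets H at a point of H^3, then C' + C
   and C' - C both vanish there, hence have nonnegative discriminants, which add
   up to 4 D <= n by the parallelogram law.  Either one of them is 0, which
   forces C' = +-C and g H = H, or 0 < disc(C' - C) < n, which is impossible
   for a multiple of n^2. *)

Set Implicit Arguments.
Unset Strict Implicit.
Unset Printing Implicit Defensive.

Import Order.TTheory GRing.Theory Num.Theory.
Local Open Scope ring_scope.
Local Open Scope complex_scope.

Lemma squarefree_sqr_int (d : nat) (y : rat) (m : int) :
  (0 < d)%N -> squarefree d -> d%:R * y ^+ 2 = m%:~R -> exists k : int, y = k%:~R.
Proof.
move=> d_gt0 sqf_d dy2.
set p := numq y; set q := denq y.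
have y_pq : y = p%:~R / q%:~R by rewrite /p /q divq_num_den.
have q_gt0 : 0 < q by apply: denq_gt0.
have eq_pq : d%:Z * (p * p) = m * (q * q).
  apply: (@intr_inj rat); rewrite !rmorphM /= -dy2 y_pq.
  by field; rewrite intr_eq0 gt_eqF.
have q2_dvd_d : (`|q| * `|q| %| d)%N.
  have cop : coprime (`|q| * `|q|) (`|p| * `|p|).
    have := coprime_num_den y; rewrite -/p -/q coprime_sym => c.
    by rewrite coprimeMl !coprimeMr c.
  rewrite -(Gauss_dvdl _ cop); apply/dvdnP; exists `|m|%N.
  by have := congr1 absz eq_pq; rewrite !abszM.
have q1 : `|q|%N = 1%N.
  case: (ltngtP `|q| 1) => // q_gt1; first by move: q_gt0 q_gt1; lia.
  have := sqf_d _ (pdiv_prime q_gt1); apply: contraNeq => _.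
  by apply: dvdn_trans q2_dvd_d; apply: dvdn_mul; apply: pdiv_dvd.
by exists p; rewrite y_pq (_ : q = 1) ?divr1 //; move: q_gt0 q1; lia.
Qed.

Lemma int_parity (t : int) : exists q r : int, t = 2 * q + r /\ (r = 0 \/ r = 1).
Proof.
exists (t %/ 2)%Z, (t %% 2)%Z; have := divz_eq t 2.
have := modz_ge0 t (isT : (2 : int) != 0); have := ltz_pmod t (isT : (0 : int) < 2).
lia.
Qed.

Lemma sum_sqr_mod4_even (t y k m r : int) :
  t * t + (4 * k + r) * (y * y) = 4 * m -> r = 1 \/ r = 2 ->
  exists u v : int, t = 2 * u /\ y = 2 * v.
Proof.
have [u [i [-> hi]]] := int_parity t; have [v [j [-> hj]]] := int_parity y.
move=> e hr; exists u, v.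
by case: hi => ?; case: hj => ?; case: hr => ?; subst; split; lia.
Qed.

Lemma sum_sqr_mod4_same_parity (t y k m : int) :
  t * t + (4 * k + 3) * (y * y) = 4 * m -> exists u : int, t = 2 * u + y.
Proof.
have [u [i [-> hi]]] := int_parity t; have [v [j [-> hj]]] := int_parity y.
move=> e; exists (u - v).
by case: hi => ?; case: hj => ?; subst; lia.
Qed.

Lemma int_sqr_multiple_between (n k : int) : 0 < n * n * k -> n * n * k < n -> False.
Proof.
move=> nnk_gt0 nnk_lt_n; have n_gt0 : 0 < n by nia.
have k_gt0 : 0 < k by nia.
have : 1 <= n * k by nia.
nia.
Qed.

Lemma monic_dvd_int_coef (m : {poly rat}) (p : {poly int}) :
  m \is monic -> p \is monic -> m %| map_poly intr p ->
  forall i, exists k : int, m`_i = k%:~R.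
Proof.
move=> /monicP m_monic /monicP p_monic /dvdpP_rat_int[p1 [a a_neq0 m_eq] [r p_eq]] i.
have lead_p1 : lead_coef r * lead_coef p1 = 1 by rewrite mulrC -lead_coefM -p_eq.
have lead_map : lead_coef (map_poly intr p1 : {poly rat}) = (lead_coef p1)%:~R.
  by rewrite lead_coef_map_inj //; apply: intr_inj.
move: m_monic; rewrite m_eq lead_coefZ lead_map.
have /orP[/eqP-> | /eqP->] := intUnitRing.unitzPl lead_p1 => [|/eqP].
- by rewrite mulr1 => a1; exists p1`_i; rewrite a1 scale1r coef_map.
- rewrite mulrN1 eqr_oppLR => /eqP aN1.
  by exists (- p1`_i); rewrite aN1 scaleN1r coefN coef_map rmorphN.
Qed.

Lemma rat_root_monic_int (p : {poly int}) (x : rat) :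
  p \is monic -> root (map_poly intr p) x -> exists k : int, x = k%:~R.
Proof.
move=> p_monic px0.
have dvd_p : 'X - x%:P %| map_poly intr p by rewrite dvdp_XsubCl.
have [k] := monic_dvd_int_coef (monicXsubC x) p_monic dvd_p 0.
rewrite coefB coefX coefC /= sub0r => /eqP; rewrite eqr_oppLR => /eqP ->.
by exists (- k); rewrite rmorphN.
Qed.

Section QuadraticIntegers.
Variable R : realType.
Implicit Types w : R[i].

Lemma intr_complex (k : int) : k%:~R = (k%:~R : R)%:C.
Proof. by rewrite rmorph_int. Qed.

Lemma Im_real_mul (k : R) w : complex.Im (k%:C * w) = k * complex.Im w.
Proof. by case: w => a b /=; ring. Qed.

Lemma ratr_complex (q : rat) : ratr q = (ratr q : R)%:C.
Proof. by rewrite fmorph_rat. Qed.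

Lemma ratr_half (q : rat) (k : int) : 2 * q = k%:~R -> ratr q = k%:~R / 2 :> R[i].
Proof.
move=> qE; rewrite -[k%:~R](rmorph_int (ratr : {rmorphism rat -> R[i]})) -qE rmorphM.
by rewrite /= rmorph_nat mulrAC divff ?mul1r ?pnatr_eq0.
Qed.

Lemma sqrt_md_sqr (d : nat) : sqrt_md R d ^+ 2 = - d%:R.
Proof.
rewrite /sqrt_md -(rmorph_nat (real_complex R)) expr2; simpc.
by rewrite -expr2 sqr_sqrtr ?ler0n.
Qed.

Lemma rat_poly_nonreal_root (r : {poly rat}) w :
  (size r <= 2)%N -> complex.Im w != 0 -> root (map_poly ratr r) w -> r = 0.
Proof.
move=> size_r Im_w /eqP.
rewrite (@horner_coef_wide _ 2) ?size_map_poly // !big_ord_recr big_ord0 /= !coef_map /=.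
rewrite add0r expr0 mulr1 expr1 !ratr_complex.
case: w Im_w => u v /= v_neq0 /eqP; rewrite eq_complex /= !mul0r subr0 !addr0 add0r.
case/andP => r0; rewrite mulf_eq0 (negbTE v_neq0) orbF fmorph_eq0 => /eqP r1.
move: r0; rewrite r1 rmorph0 mul0r addr0 fmorph_eq0 => /eqP r0.
apply/polyP => i; rewrite coef0; case: i => [|[|i]] //.
by rewrite nth_default //; apply: leq_trans size_r _.
Qed.

Lemma Od_trace_norm (d : nat) w : (0 < d)%N -> in_Od d w ->
  exists x y : rat, [/\ w = ratr x + ratr y * sqrt_md R d,
    exists t : int, 2 * x = t%:~R & exists m : int, x ^+ 2 + d%:R * y ^+ 2 = m%:~R].
Proof.
move=> d_gt0 [[x [y w_xy]] [p [p_monic pw0]]].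
suff [] : (exists t : int, 2 * x = t%:~R) /\
    (exists m : int, x ^+ 2 + d%:R * y ^+ 2 = m%:~R) by exists x, y.
set pQ := map_poly intr p : {poly rat}.
have pQw0 : root (map_poly ratr pQ) w.
  by rewrite -map_poly_comp (eq_map_poly (rmorph_int _)).
have [y0|y_neq0] := eqVneq y 0.
  have px0 : root pQ x.
    by move: pQw0; rewrite w_xy y0 rmorph0 mul0r addr0 fmorph_root.
  have [k ->] := rat_root_monic_int p_monic px0.
  split; first by exists (2 * k); rewrite intrM.
  by exists (k * k); rewrite y0 expr0n mulr0 addr0 intrM expr2.
(* [m] is the minimal polynomial of [w] over Q; as a monic factor of [p] it has
   integer coefficients. *)
pose low : {poly rat} := (- (2 * x)) *: 'X + (x ^+ 2 + d%:R * y ^+ 2)%:P.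
pose m := 'X^2 + low.
have size_low : (size low <= 2)%N.
  rewrite (leq_trans (size_polyD _ _)) // geq_max (leq_trans (size_polyC_leq1 _)) //.
  by rewrite (leq_trans (size_scale_leq _ _)) ?size_polyX.
have size_m : size m = 3%N.
  by rewrite size_polyDl ?size_polyXn // (leq_ltn_trans size_low) ?size_polyXn.
have m_monic : m \is monic.
  by apply/monicP; rewrite lead_coefDl ?lead_coefXn ?size_polyXn // ltnS.
have horner_quad (c1 c0 : rat) :
    (map_poly ratr ('X^2 + (c1 *: 'X + c0%:P))).[w] = w ^+ 2 + (ratr c1 * w + ratr c0).
  by rewrite !rmorphD /= map_polyXn map_polyZ map_polyX map_polyC !hornerE.
have mw0 : root (map_poly ratr m) w.
  rewrite /root horner_quad !(rmorphD, rmorphN, rmorphM, rmorphXn, rmorph_nat) w_xy.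
  apply/eqP; transitivity ((ratr y) ^+ 2 * (sqrt_md R d ^+ 2 + d%:R) : R[i]); first by ring.
  by rewrite sqrt_md_sqr addNr mulr0.
have m_dvd : m %| pQ.
  apply/modp_eq0P/(rat_poly_nonreal_root (w := w)).
  - by rewrite -ltnS -size_m ltn_modp monic_neq0.
  - rewrite w_xy !ratr_complex /sqrt_md /= mul0r add0r addr0.
    by rewrite mulf_neq0 ?fmorph_eq0 // sqrtr_eq0 -ltNge ltr0n.
  - move: pQw0; rewrite /root {1}(divp_eq pQ m) rmorphD rmorphM /= hornerD hornerM.
    by rewrite (eqP mw0) mulr0 add0r.
have [k1] := monic_dvd_int_coef m_monic p_monic m_dvd 1.
have [k0] := monic_dvd_int_coef m_monic p_monic m_dvd 0.
rewrite /m /low !coefD !coefXn !coefZ !coefX !coefC /= !mulr0 !mulr1 !add0r !addr0 => k0E k1E.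
by split; [exists (- k1); rewrite mulrNz -k1E opprK | exists k0].
Qed.
End QuadraticIntegers.

Section IntegralLattice.
Variables (R : realType) (om : R[i]) (tr nm : int).
Hypotheses (om_trace : om + om^* = tr%:~R) (om_norm : om * om^* = nm%:~R).

Definition in_Zom (w : R[i]) := exists u v : int, w = u%:~R + v%:~R * om.

Lemma Zom_int (k : int) : in_Zom k%:~R.
Proof. by exists k, 0; rewrite mul0r addr0. Qed.

Lemma ZomD w1 w2 : in_Zom w1 -> in_Zom w2 -> in_Zom (w1 + w2).
Proof.
move=> [u1 [v1 ->]] [u2 [v2 ->]]; exists (u1 + u2), (v1 + v2).
by rewrite !intrD; ring.
Qed.

Lemma ZomM w1 w2 : in_Zom w1 -> in_Zom w2 -> in_Zom (w1 * w2).
Proof.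
move=> [u1 [v1 ->]] [u2 [v2 ->]].
exists (u1 * u2 - v1 * v2 * nm), (u1 * v2 + v1 * u2 + v1 * v2 * tr).
have om_sqr : om * om = tr%:~R * om - nm%:~R by rewrite -om_trace -om_norm; ring.
rewrite !(intrD, intrM, intrB); transitivity
  ((u1 * u2)%:~R + (u1 * v2 + v1 * u2)%:~R * om + (v1 * v2)%:~R * (om * om) : R[i]).
  by rewrite !(intrD, intrM); ring.
by rewrite om_sqr !(intrD, intrM); ring.
Qed.

Lemma ZomJ w : in_Zom w -> in_Zom w^*.
Proof.
move=> [u [v ->]]; exists (u + v * tr), (- v).
have om_conj : om^* = tr%:~R - om by rewrite -om_trace; ring.
by rewrite rmorphD rmorphM /= !rmorph_int om_conj !(intrD, intrM, intrN); ring.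
Qed.

Lemma Zom_real_int w : complex.Im om != 0 -> in_Zom w -> complex.Im w = 0 ->
  exists k : int, w = k%:~R.
Proof.
move=> Im_om [u [v ->]] Im_w; exists u.
suff -> : v = 0 by rewrite mul0r addr0.
have : (v%:~R : R) * complex.Im om = 0.
  by move: Im_w; rewrite !intr_complex; case: (om) => a b /= <-; ring.
by move/eqP; rewrite mulf_eq0 (negbTE Im_om) orbF intr_eq0 => /eqP.
Qed.

Lemma Zom_normsq_int w : in_Zom w -> exists m : int, normsq w = m%:~R.
Proof.
move=> [u [v ->]]; exists (u * u + u * v * tr + v * v * nm).
apply: (@complexI R); rewrite -intr_complex.
rewrite (_ : (normsq _)%:C = (u%:~R + v%:~R * om) * (u%:~R + v%:~R * om)^*).
  rewrite rmorphD rmorphM !rmorph_int !(intrD, intrM); transitivity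
    (u%:~R * u%:~R + u%:~R * v%:~R * (om + om^*) + v%:~R * v%:~R * (om * om^*) : R[i]).
    by ring.
  by rewrite om_trace om_norm.
set z := u%:~R + v%:~R * om; rewrite /normsq; case: z => a b /=.
by apply/eqP; rewrite eq_complex /=; apply/andP; split; apply/eqP; ring.
Qed.
End IntegralLattice.

Section OmegaD.
Variable R : realType.

Definition omega_d (d : nat) : R[i] :=
  if (d %% 4 == 3)%N then (1 + sqrt_md R d) / 2 else sqrt_md R d.

Lemma omega_d_trace (d : nat) :
  omega_d d + (omega_d d)^* = (if (d %% 4 == 3)%N then 1 else 0)%:~R.
Proof.
rewrite /omega_d /sqrt_md; case: ifP => _ /=; apply/eqP; rewrite eq_complex /=.
  by apply/andP; split; apply/eqP; field.
by apply/andP; split; apply/eqP; ring.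
Qed.

Lemma omega_d_norm (d : nat) : omega_d d * (omega_d d)^* =
  (if (d %% 4 == 3)%N then ((d + 1) %/ 4)%N%:Z else d%:Z)%:~R.
Proof.
have sqrt_d2 : Num.sqrt (d%:R : R) * Num.sqrt d%:R = d%:R.
  by rewrite -expr2 sqr_sqrtr ?ler0n.
rewrite /omega_d /sqrt_md intr_complex; case: ifP => /eqP d3; apply/eqP; rewrite eq_complex /=.
  have d4 : ((d + 1) %/ 4 * 4 = d.+1)%N by have := divn_eq d 4; lia.
  have -> : (((d + 1) %/ 4)%N%:Z)%:~R = (d%:R + 1) / 4 :> R.
    by rewrite natr1 -d4 natrM mulfK ?pnatr_eq0.
  apply/andP; split; apply/eqP.
    by transitivity ((1 + Num.sqrt (d%:R : R) * Num.sqrt d%:R) / 4); [field | rewrite sqrt_d2 addrC].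
  by field.
rewrite (_ : (d%:Z)%:~R = d%:R :> R) //.
by apply/andP; split; apply/eqP; [rewrite -[RHS]sqrt_d2 | ]; ring.
Qed.

Lemma omega_d_Im_neq0 (d : nat) : (0 < d)%N -> complex.Im (omega_d d) != 0.
Proof.
move=> d_gt0; have sqrt_d : Num.sqrt (d%:R : R) != 0 by rewrite sqrtr_eq0 -ltNge ltr0n.
rewrite /omega_d /sqrt_md; case: ifP => _ //.
rewrite mulrC -(rmorph_nat (real_complex R)) -fmorphV Im_real_mul /= add0r.
by rewrite mulf_neq0 ?invr_eq0 ?pnatr_eq0.
Qed.

Lemma Od_sub_Zomega (d : nat) w :
  (0 < d)%N -> squarefree d -> in_Od d w -> in_Zom (omega_d d) w.
Proof.
move=> d_gt0 sqf_d Od_w.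
have [x [y [w_xy [t tE] [m norm_xy]]]] := Od_trace_norm d_gt0 Od_w.
have [s sE] : exists s : int, 2 * y = s%:~R.
  apply: (squarefree_sqr_int d_gt0 sqf_d (m := 4 * m - t * t)).
  by rewrite intrB !intrM -norm_xy -tE; ring.
have norm_ts : t * t + d%:Z * (s * s) = 4 * m.
  apply: (@intr_inj rat); rewrite !(intrD, intrM) -tE -sE -norm_xy.
  by rewrite (_ : (d%:Z)%:~R = d%:R) //; ring.
have dE : d%:Z = 4 * (d %/ 4)%N%:Z + (d %% 4)%N%:Z by rewrite {1}(divn_eq d 4); lia.
rewrite dE in norm_ts.
have w_ts : w = (t%:~R + s%:~R * sqrt_md R d) / 2.
  by rewrite w_xy (ratr_half R tE) (ratr_half R sE) mulrDl mulrAC.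
rewrite /omega_d; case: ifP => [/eqP d3 | /negbT d_n3].
  move: norm_ts; rewrite d3 => /sum_sqr_mod4_same_parity[u tE'].
  by exists u, s; rewrite w_ts tE' !(intrD, intrM); field.
have d_mod4 : (d %% 4)%N%:Z = 1 \/ (d %% 4)%N%:Z = 2.
  have := sqf_d 2 isT; rewrite /dvdn => d_n0.
  by have := ltn_pmod d (isT : (0 < 4)%N); move: d_n3 d_n0; lia.
have [u [v [tE' sE']]] := sum_sqr_mod4_even norm_ts d_mod4.
by exists u, v; rewrite w_ts tE' sE' !intrM; field.
Qed.
End OmegaD.

Local Open Scope classical_set_scope.

Section HermitianForms.
Variable R : realType.
Implicit Types (a c t : R) (B z w al be ga de : R[i]) (p : H3 R).

Lemma normsq_ge0 w : 0 <= normsq w.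
Proof. by rewrite /normsq addr_ge0 ?sqr_ge0. Qed.

Lemma normsq_eq0 w : (normsq w == 0) = (w == 0).
Proof.
case: w => x y; rewrite /normsq eq_complex /= paddr_eq0 ?sqr_ge0 //.
by rewrite !sqrf_eq0.
Qed.

Lemma normsq1 : normsq (1 : R[i]) = 1.
Proof. by rewrite /normsq /= expr0n expr1n addr0. Qed.

Lemma normsq_real_mul (k : R) (w : R[i]) : normsq (k%:C * w) = k ^+ 2 * normsq w.
Proof. by case: w => x y; rewrite /normsq /=; ring. Qed.

Definition hform a B c p : R :=
  a * (normsq p.1 + p.2 ^+ 2) + complex.Re (B * p.1 + B^* * p.1^*) + c.

Definition hdisc a B c : R := normsq B - a * c.

Definition hplane_of a B c : set (H3 R) := [set p | 0 < p.2 /\ hform a B c p = 0].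

Lemma hplaneE (a c : int) B : hplane a B c = hplane_of a%:~R B c%:~R.
Proof. by []. Qed.

Lemma hformD a1 B1 c1 a2 B2 c2 p :
  hform (a1 + a2) (B1 + B2) (c1 + c2) p = hform a1 B1 c1 p + hform a2 B2 c2 p.
Proof.
by case: p => -[x y] t; case: B1 => b1 b2; case: B2 => b3 b4; rewrite /hform /normsq /=; ring.
Qed.

Lemma hformN a B c p : hform (- a) (- B) (- c) p = - hform a B c p.
Proof.
by case: p => -[x y] t; case: B => b1 b2; rewrite /hform /normsq /=; ring.
Qed.

Lemma hformZ e a B c p : hform (e * a) (e%:C * B) (e * c) p = e * hform a B c p.
Proof.
by case: p => -[x y] t; case: B => b1 b2; rewrite /hform /normsq /=; ring.
Qed.

Lemma hdisc_parallelogram a1 B1 c1 a2 B2 c2 :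
  hdisc (a1 + a2) (B1 + B2) (c1 + c2) + hdisc (a1 - a2) (B1 - B2) (c1 - c2) =
  2 * hdisc a1 B1 c1 + 2 * hdisc a2 B2 c2.
Proof. by case: B1 => b1 b2; case: B2 => b3 b4; rewrite /hdisc /normsq /=; ring. Qed.

Lemma normsq_hform_hdisc a B c z t :
  normsq (a%:C * z + B^*) + a ^+ 2 * t ^+ 2 = a * hform a B c (z, t) + hdisc a B c.
Proof. by case: B => b1 b2; case: z => x y; rewrite /hform /hdisc /normsq /=; ring. Qed.

Lemma hdisc_ge0_of_root a B c z t : hform a B c (z, t) = 0 -> 0 <= hdisc a B c.
Proof.
move=> F0; have := normsq_hform_hdisc a B c z t; rewrite F0 mulr0 add0r => <-.
by rewrite addr_ge0 ?normsq_ge0 // mulr_ge0 ?sqr_ge0.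
Qed.

Lemma hdisc_eq0_of_root a B c z t : 0 < t -> hform a B c (z, t) = 0 ->
  hdisc a B c = 0 -> [/\ a = 0, B = 0 & c = 0].
Proof.
move=> t_gt0 F0 Q0; have := normsq_hform_hdisc a B c z t; rewrite F0 Q0 mulr0 addr0.
have at_ge0 : 0 <= a ^+ 2 * t ^+ 2 by rewrite mulr_ge0 ?sqr_ge0.
move/eqP; rewrite paddr_eq0 ?normsq_ge0 //.
rewrite mulf_eq0 !sqrf_eq0 (gt_eqF t_gt0) orbF normsq_eq0 => /andP[+ /eqP a0].
rewrite a0 mul0r add0r conjc_eq0 => /eqP B0; split=> //.
by move: F0; rewrite /hform a0 B0 rmorph0 !mul0r !add0r.
Qed.

Definition mob_den al be ga de p : R := normsq (ga * p.1 + de) + normsq ga * p.2 ^+ 2.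

(* The coefficients of [g^* [[a, B^*], [B, c]] g] for [g = [[al, be], [ga, de]]],
   whose circle is the preimage under [g] of the circle of [(a, B, c)]. *)
Definition pullback_a al be ga de a B c : R :=
  a * normsq al + complex.Re (B * al * ga^* + B^* * al^* * ga) + c * normsq ga.

Definition pullback_B al be ga de a B c : R[i] :=
  a%:C * al * be^* + B^* * ga * be^* + B * al * de^* + c%:C * ga * de^*.

Definition pullback_c al be ga de a B c : R :=
  a * normsq be + complex.Re (B * be * de^* + B^* * be^* * de) + c * normsq de.

Lemma normsq_mob_num al be ga de z t :
  normsq ((al * z + be) * (ga * z + de)^* + al * ga^* * (t ^+ 2)%:C) +
    t ^+ 2 * normsq (al * de - be * ga) =
  mob_den al be ga de (z, t) * (normsq (al * z + be) + normsq al * t ^+ 2).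
Proof.
case: al => a1 a2; case: be => b1 b2; case: ga => g1 g2; case: de => d1 d2; case: z => x y.
by rewrite /mob_den /normsq /=; ring.
Qed.

Lemma mob_den_gt0 al be ga de z t : al * de - be * ga = 1 -> 0 < t ->
  0 < mob_den al be ga de (z, t).
Proof.
move=> det1 t_gt0; have gat_ge0 : 0 <= normsq ga * t ^+ 2 by rewrite mulr_ge0 ?normsq_ge0 ?sqr_ge0.
rewrite /mob_den /= lt_def addr_ge0 ?normsq_ge0 // andbT paddr_eq0 ?normsq_ge0 //.
rewrite mulf_eq0 sqrf_eq0 (gt_eqF t_gt0) orbF !normsq_eq0.
apply/negP => /andP[/eqP + /eqP ga0]; rewrite ga0 mul0r add0r => de0.
by move: det1; rewrite ga0 de0 !mulr0 subr0 => /eqP; rewrite eq_sym oner_eq0.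
Qed.

Lemma mob_act_gt0 al be ga de p : al * de - be * ga = 1 -> 0 < p.2 ->
  0 < (mob_act al be ga de p).2.
Proof.
by case: p => z t /= det1 t_gt0; rewrite divr_gt0 // (mob_den_gt0 z det1 t_gt0).
Qed.

Lemma det_adj al be ga de : al * de - be * ga = 1 -> de * al - (- be) * (- ga) = 1.
Proof. by rewrite mulrNN mulrC. Qed.

Lemma hform_scaled_point a B c w t N Y : N != 0 -> normsq w + t ^+ 2 = N * Y ->
  hform a B c (w * (N^-1)%:C, t / N) * N =
  a * Y + complex.Re (B * w + B^* * w^*) + c * N.
Proof.
move=> N_neq0 wtY; rewrite -[Y](mulKf N_neq0) -wtY.
by case: w {wtY} => x y; case: B => b1 b2; rewrite /hform /normsq /=; field.
Qed.

Lemma hform_mob_act al be ga de a B c z t : al * de - be * ga = 1 -> 0 < t ->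
  hform a B c (mob_act al be ga de (z, t)) * mob_den al be ga de (z, t) =
  hform (pullback_a al be ga de a B c) (pullback_B al be ga de a B c)
        (pullback_c al be ga de a B c) (z, t).
Proof.
move=> det1 t_gt0; have N_neq0 := lt0r_neq0 (mob_den_gt0 z det1 t_gt0).
have := normsq_mob_num al be ga de z t; rewrite det1 normsq1 mulr1.
rewrite /mob_act /= => /(hform_scaled_point a B c N_neq0) ->; clear det1 N_neq0.
rewrite /pullback_a /pullback_B /pullback_c /hform /mob_den /normsq /=.
case: B => b1 b2; case: al => a1 a2; case: be => b3 b4; case: ga => g1 g2; case: de => d1 d2.
by case: z => x y /=; ring.
Qed.

Lemma hdisc_pullback al be ga de a B c :
  hdisc (pullback_a al be ga de a B c) (pullback_B al be ga de a B c)
        (pullback_c al be ga de a B c) = normsq (al * de - be * ga) * hdisc a B c.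
Proof.
rewrite /hdisc /pullback_a /pullback_B /pullback_c /normsq.
case: B => b1 b2; case: al => a1 a2; case: be => b3 b4; case: ga => g1 g2; case: de => d1 d2.
by rewrite /=; ring.
Qed.

(* [(z, t)] as the Hermitian matrix [(1/t) [[|z|^2 + t^2, z], [z^*, 1]]], on
   which Moebius maps act linearly; this is how [mob_act] is inverted. *)
Definition herm_of_point p : R * R[i] * R :=
  ((normsq p.1 + p.2 ^+ 2) / p.2, p.1 * (p.2^-1)%:C, p.2^-1).

Definition herm_act al be ga de (X : R * R[i] * R) : R * R[i] * R :=
  let: (u, w, v) := X in
  (normsq al * u + complex.Re (al * w * be^* + be * w^* * al^*) + normsq be * v,
   al * ga^* * u%:C + be * ga^* * w^* + al * de^* * w + be * de^* * v%:C,
   normsq ga * u + complex.Re (ga * w * de^* + de * w^* * ga^*) + normsq de * v).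

Lemma herm_of_point_mob_act al be ga de z t : al * de - be * ga = 1 -> 0 < t ->
  herm_of_point (mob_act al be ga de (z, t)) = herm_act al be ga de (herm_of_point (z, t)).
Proof.
move=> det1 t_gt0; have N_neq0 := lt0r_neq0 (mob_den_gt0 z det1 t_gt0).
have t_neq0 := lt0r_neq0 t_gt0.
have := normsq_mob_num al be ga de z t; rewrite det1 normsq1 mulr1.
rewrite /herm_of_point /mob_act /herm_act /=; move: N_neq0; rewrite /mob_den /=.
set N := _ + _ => N_neq0 numE.
have -> : (normsq (((al * z + be) * (ga * z + de)^* + al * ga^* * (t ^+ 2)%:C) * (N^-1)%:C)
    + (t / N) ^+ 2) / (t / N) = (normsq (al * z + be) + normsq al * t ^+ 2) / t.
  rewrite -[X in _ = X / t](mulKf N_neq0) -numE; move: (_ * _ + _) => w.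
  by case: w => a b; rewrite /normsq /=; field; apply/andP.
move: N_neq0 numE; rewrite /N /normsq => + _; clear det1 N.
case: al => a1 a2; case: be => b1 b2; case: ga => g1 g2; case: de => d1 d2; case: z => x y.
move=> /= N_neq0; congr (_, _, _).
- by field.
- by apply/eqP; rewrite eq_complex /=; apply/andP; split; apply/eqP; field; apply/andP.
- by field; apply/andP.
Qed.

Lemma herm_act_adj al be ga de u w v :
  herm_act al be ga de (herm_act de (- be) (- ga) al (u, w, v)) =
  (normsq (al * de - be * ga) * u, (normsq (al * de - be * ga))%:C * w,
   normsq (al * de - be * ga) * v).
Proof.
rewrite /herm_act /normsq.
case: al => a1 a2; case: be => b1 b2; case: ga => g1 g2; case: de => d1 d2; case: w => x y.
by rewrite /=; congr (_, _, _); [ring | congr (_ +i* _); ring | ring].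
Qed.

Lemma herm_of_point_inj p1 p2 : 0 < p1.2 -> 0 < p2.2 ->
  herm_of_point p1 = herm_of_point p2 -> p1 = p2.
Proof.
case: p1 p2 => z1 t1 [z2 t2] /= t1_gt0 t2_gt0 [_ zE /invr_inj tE]; subst t2.
congr (_, _); apply: (mulIf _ zE).
by rewrite eq_complex /= negb_and invr_eq0 gt_eqF.
Qed.

Lemma mob_actK al be ga de p : al * de - be * ga = 1 -> 0 < p.2 ->
  mob_act al be ga de (mob_act de (- be) (- ga) al p) = p.
Proof.
move=> det1; have det1' := det_adj det1; case: p => z t /= t_gt0.
set q := mob_act de (- be) (- ga) al (z, t).
have q_gt0 : 0 < q.2 := mob_act_gt0 (p := (z, t)) det1' t_gt0.
apply: herm_of_point_inj => //; first exact: mob_act_gt0.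
rewrite [q]surjective_pairing herm_of_point_mob_act // -surjective_pairing.
by rewrite herm_of_point_mob_act // herm_act_adj det1 normsq1 !mul1r.
Qed.

Lemma hform_common_root a B c a' B' c' z t : 0 < t ->
  hform a B c (z, t) = 0 -> hform a' B' c' (z, t) = 0 -> hdisc a' B' c' = hdisc a B c ->
  [\/ [/\ a' = a, B' = B & c' = c], [/\ a' = - a, B' = - B & c' = - c]
     | 0 < hdisc (a' - a) (B' - B) (c' - c) < 4 * hdisc a B c].
Proof.
move=> t_gt0 F0 F'0 QE.
have Fm0 : hform (a' - a) (B' - B) (c' - c) (z, t) = 0 by rewrite hformD hformN F0 F'0 subrr.
have Fp0 : hform (a' + a) (B' + B) (c' + c) (z, t) = 0 by rewrite hformD F0 F'0 addr0.
have Qsum : hdisc (a' + a) (B' + B) (c' + c) + hdisc (a' - a) (B' - B) (c' - c) =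
    4 * hdisc a B c by rewrite hdisc_parallelogram QE; ring.
have [Qm0 | Qm_neq0] := eqVneq (hdisc (a' - a) (B' - B) (c' - c)) 0.
  by case: (hdisc_eq0_of_root t_gt0 Fm0 Qm0) => /subr0_eq-> /subr0_eq-> /subr0_eq->; apply: Or31.
have [Qp0 | Qp_neq0] := eqVneq (hdisc (a' + a) (B' + B) (c' + c)) 0.
  case: (hdisc_eq0_of_root t_gt0 Fp0 Qp0) => /eqP + /eqP + /eqP.
  by rewrite !addr_eq0 => /eqP-> /eqP-> /eqP->; apply: Or32.
apply: Or33; have Qp_gt0 : 0 < hdisc (a' + a) (B' + B) (c' + c).
  by rewrite lt_def Qp_neq0 (hdisc_ge0_of_root Fp0).
rewrite lt_def Qm_neq0 (hdisc_ge0_of_root Fm0) /=; lra.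
Qed.

Lemma mob_image_hplane al be ga de a B c e : al * de - be * ga = 1 -> e != 0 ->
  pullback_a al be ga de a B c = e * a -> pullback_B al be ga de a B c = e%:C * B ->
  pullback_c al be ga de a B c = e * c ->
  mob_act al be ga de @` hplane_of a B c = hplane_of a B c.
Proof.
move=> det1 e_neq0 paE pBE pcE.
have hformE q : 0 < q.2 ->
    hform a B c (mob_act al be ga de q) * mob_den al be ga de q = e * hform a B c q.
  case: q => z t /= t_gt0.
  by rewrite hform_mob_act // paE pBE pcE hformZ.
apply/seteqP; split.
- move=> _ [q [q_gt0 Fq0] <-]; split; first exact: mob_act_gt0.
  have := hformE q q_gt0; rewrite Fq0 mulr0 => /eqP; rewrite mulf_eq0 => /orP[/eqP //|].
  by case: q q_gt0 {Fq0} => z t /= t_gt0; rewrite gt_eqF ?mob_den_gt0.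
- move=> q [q_gt0 Fq0]; exists (mob_act de (- be) (- ga) al q); last exact: mob_actK.
  have r_gt0 := mob_act_gt0 (det_adj det1) q_gt0; split=> //.
  move: (hformE _ r_gt0); rewrite mob_actK // Fq0 mul0r => /esym/eqP.
  by rewrite mulf_eq0 (negbTE e_neq0) => /eqP.
Qed.

Lemma mob_hplane_meet al be ga de a B c p : al * de - be * ga = 1 ->
  hplane_of a B c p -> hplane_of a B c (mob_act al be ga de p) ->
  mob_act al be ga de @` hplane_of a B c = hplane_of a B c \/
  0 < hdisc (pullback_a al be ga de a B c - a) (pullback_B al be ga de a B c - B)
            (pullback_c al be ga de a B c - c) < 4 * hdisc a B c.
Proof.
move=> det1; case: p => z t [/= t_gt0 F0] [_ Fp0].
have F'0 : hform (pullback_a al be ga de a B c) (pullback_B al be ga de a B c)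
    (pullback_c al be ga de a B c) (z, t) = 0.
  by rewrite -hform_mob_act // Fp0 mul0r.
have QE := hdisc_pullback al be ga de a B c; rewrite det1 normsq1 mul1r in QE.
case: (hform_common_root t_gt0 F0 F'0 QE) => [[paE pBE pcE] | [paE pBE pcE] |]; last by right.
  by left; apply: (mob_image_hplane (e := 1)); rewrite ?mul1r ?rmorph1 ?mul1r ?oner_neq0.
left; apply: (mob_image_hplane (e := -1)); rewrite ?mulN1r ?rmorphN1 ?mulN1r //.
by rewrite oppr_eq0 oner_neq0.
Qed.

Lemma mob_hplane_embedded al be ga de a B c (n : int) : al * de - be * ga = 1 ->
  4 * hdisc a B c <= n%:~R ->
  (exists k : int, hdisc (pullback_a al be ga de a B c - a) (pullback_B al be ga de a B c - B)
                         (pullback_c al be ga de a B c - c) = (n * n * k)%:~R) ->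
  mob_act al be ga de @` hplane_of a B c = hplane_of a B c \/
  mob_act al be ga de @` hplane_of a B c `&` hplane_of a B c = set0.
Proof.
move=> det1 Q_le_n [k Qk].
have [[p [Hp Hp']] | no_meet] :=
  pselect (exists p, hplane_of a B c p /\ hplane_of a B c (mob_act al be ga de p)).
  case: (mob_hplane_meet det1 Hp Hp') => [|]; first by left.
  rewrite Qk => /andP[nnk_gt0 nnk_lt]; have : (n * n * k)%:~R < n%:~R :> R by lra.
  by move: nnk_gt0; rewrite ltr0z ltr_int => /int_sqr_multiple_between.
right; apply/seteqP; split=> // _ [[p Hp <-] Hp'].
by apply: no_meet; exists p.
Qed.
End HermitianForms.

Section Congruence.
Variable R : realType.
Implicit Types (a c e n : R) (B al be ga de : R[i]).

Lemma pullback_a_sub_congr a c e n B al1 be ga1 de : e * e = 1 ->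
  (pullback_a (e%:C + n%:C * al1) be (n%:C * ga1) de a B c - a)%:C =
  n%:C * (a%:C * (e%:C * (al1 + al1^*) + n%:C * (al1 * al1^*))
     + B * (e%:C + n%:C * al1) * ga1^* + B^* * (e%:C + n%:C * al1)^* * ga1
     + c%:C * n%:C * (ga1 * ga1^*)).
Proof.
move=> e2; rewrite -[a in (_ - a)%:C]mul1r -e2.
case: B => b1 b2; case: al1 => a1 a2; case: ga1 => g1 g2.
by rewrite /pullback_a /normsq; apply/eqP; rewrite eq_complex /=; apply/andP; split; apply/eqP; ring.
Qed.

Lemma pullback_c_sub_congr a c e n B al be1 ga de1 : e * e = 1 ->
  (pullback_c al (n%:C * be1) ga (e%:C + n%:C * de1) a B c - c)%:C =
  n%:C * (a%:C * n%:C * (be1 * be1^*)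
     + B * be1 * (e%:C + n%:C * de1)^* + B^* * be1^* * (e%:C + n%:C * de1)
     + c%:C * (e%:C * (de1 + de1^*) + n%:C * (de1 * de1^*))).
Proof.
move=> e2; rewrite -[c in (_ - c)%:C]mul1r -e2.
case: B => b1 b2; case: be1 => a1 a2; case: de1 => g1 g2.
by rewrite /pullback_c /normsq; apply/eqP; rewrite eq_complex /=; apply/andP; split; apply/eqP; ring.
Qed.

Lemma pullback_B_sub_congr a c e n B al1 be1 ga1 de1 : e * e = 1 ->
  pullback_B (e%:C + n%:C * al1) (n%:C * be1) (n%:C * ga1) (e%:C + n%:C * de1) a B c - B =
  n%:C * (a%:C * (e%:C + n%:C * al1) * be1^* + B^* * (n%:C * ga1) * be1^*
     + B * (e%:C * (al1 + de1^*) + n%:C * (al1 * de1^*))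
     + c%:C * ga1 * (e%:C + n%:C * de1)^*).
Proof.
move=> e2; rewrite -[B in _ - B]mul1r -[1]/(1%:C) -e2.
case: B => b1 b2; case: al1 => a1 a2; case: be1 => c1 c2; case: ga1 => g1 g2; case: de1 => d1 d2.
by rewrite /pullback_B; apply/eqP; rewrite eq_complex /=; apply/andP; split; apply/eqP; ring.
Qed.
End Congruence.

Section IntegralPullback.
Variables (R : realType) (om : R[i]) (tr nm : int).
Hypotheses (om_trace : om + om^* = tr%:~R) (om_norm : om * om^* = nm%:~R).
Hypothesis om_Im : complex.Im om != 0.

Lemma real_mul_Zom (x n : R) (W : R[i]) : n != 0 -> x%:C = n%:C * W -> in_Zom om W ->
  exists k : int, x = n * k%:~R.
Proof.
move=> n_neq0 xE ZW.
have [|k WE] := Zom_real_int om_Im ZW.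
  have := congr1 (@complex.Im R) xE; rewrite Im_real_mul /= => /esym/eqP.
  by rewrite mulf_eq0 (negbTE n_neq0) => /eqP.
by exists k; move: xE; rewrite WE intr_complex -rmorphM => /complexI.
Qed.

Local Ltac Zom_closure := repeat first
  [ rewrite -intr_complex; apply: Zom_int | apply: ZomD | apply: (ZomM om_trace om_norm)
  | apply: (ZomJ om_trace) | assumption ].

Lemma hdisc_pullback_sub_congr (n a c e : int) B al be ga de al1 be1 ga1 de1 :
  n != 0 -> e * e = 1 -> in_Zom om B ->
  [/\ in_Zom om al1, in_Zom om be1, in_Zom om ga1 & in_Zom om de1] ->
  [/\ al = e%:~R + n%:~R * al1, be = n%:~R * be1, ga = n%:~R * ga1 & de = e%:~R + n%:~R * de1] ->
  exists k : int,
    hdisc (pullback_a al be ga de a%:~R B c%:~R - a%:~R) (pullback_B al be ga de a%:~R B c%:~R - B)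
          (pullback_c al be ga de a%:~R B c%:~R - c%:~R) = (n * n * k)%:~R.
Proof.
move=> n_neq0 e2 ZB [Zal1 Zbe1 Zga1 Zde1]; rewrite !intr_complex => -[-> -> -> ->].
have nR_neq0 : (n%:~R : R) != 0 by rewrite intr_eq0.
have e2R : (e%:~R : R) * e%:~R = 1 by rewrite -intrM e2.
clear al be ga de.
set al := _ + _ * al1; set be := _ * be1; set ga := _ * ga1; set de := _ + _ * de1.
have [ka kaE] : exists ka : int, pullback_a al be ga de a%:~R B c%:~R - a%:~R = n%:~R * ka%:~R.
  by apply: (real_mul_Zom nR_neq0 (pullback_a_sub_congr _ _ _ _ _ _ _ _ e2R)); Zom_closure.
have [kc kcE] : exists kc : int, pullback_c al be ga de a%:~R B c%:~R - c%:~R = n%:~R * kc%:~R.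
  by apply: (real_mul_Zom nR_neq0 (pullback_c_sub_congr _ _ _ _ _ _ _ _ e2R)); Zom_closure.
have [m mE] : exists m : int, normsq (pullback_B al be ga de a%:~R B c%:~R - B) = n%:~R ^+ 2 * m%:~R.
  rewrite (pullback_B_sub_congr _ _ _ _ _ _ _ _ e2R) normsq_real_mul.
  set W := (X in normsq X); have ZW : in_Zom om W by Zom_closure.
  by have [m ->] := Zom_normsq_int om_trace om_norm ZW; exists m.
exists (m - ka * kc); rewrite /hdisc mE kaE kcE !(intrM, intrB); ring.
Qed.
End IntegralPullback.

Lemma Gamma_n_scalar_congr (R : realType) (d : nat) (n : int) (al be ga de : R[i]) :
  in_Gamma_n d n al be ga de -> exists2 e : int, e * e = 1 &
  exists al1 be1 ga1 de1 : R[i],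
    [/\ in_Od d al1, in_Od d be1, in_Od d ga1 & in_Od d de1] /\
    [/\ al = e%:~R + n%:~R * al1, be = n%:~R * be1, ga = n%:~R * ga1
      & de = e%:~R + n%:~R * de1].
Proof.
case=> _ [] [[al1 [Oal1 alE]] [[be1 [Obe1 ->]] [[ga1 [Oga1 ->]] [de1 [Ode1 deE]]]]].
  exists 1 => //; exists al1, be1, ga1, de1; split=> //.
  by split=> //; rewrite -?alE -?deE addrC subrK.
exists (-1) => //; exists al1, be1, ga1, de1; split=> //.
by split=> //; rewrite -?alE -?deE mulrN1z addrC addrK.
Qed.

Theorem theorem1p3 (R : realType) (d : nat) (n : int)
  (hd : (0 < d)%N) (hsf : squarefree d)
  (a : int) (B : R[i]) (c : int) (hB : in_Od d B)
  (hD : 0 < discr a B c) (hDn : 4 * discr a B c <= n%:~R) :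
  embedded_in_Gamma_n d n a B c.
Proof.
move=> al be ga de Gn; have [[_ _ _ _ det1] _] := Gn.
rewrite hplaneE; apply: (mob_hplane_embedded det1 hDn).
have n_gt0 : (0 : R) < n%:~R by lra.
have n_neq0 : n != 0 by move: n_gt0; rewrite ltr0z => /gt_eqF->.
have [e e2 [al1 [be1 [ga1 [de1 [[Oal1 Obe1 Oga1 Ode1] entriesE]]]]]] := Gamma_n_scalar_congr Gn.
have Od_Zom w : in_Od d w -> in_Zom (omega_d R d) w := Od_sub_Zomega hd hsf.
apply: (hdisc_pullback_sub_congr (omega_d_trace R d) (omega_d_norm R d) (omega_d_Im_neq0 R hd) a c
  n_neq0 e2 (Od_Zom _ hB) _ entriesE).
by split; apply: Od_Zom.
Qed.
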